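(* Let $S=\langle T,\Pi,C\rangle$ be a state space and let $(A_i,\psi_i)$, $1\le i\le k$, be abstractions of $S$ forming an additive abstraction system. Let $t,g\in T$ and let $\pi$ be a path from $t$ to $g$ in $S$ with $C(\pi)=\sum_{i=1}^k C^*_i(t_i,g_i)$. Then $C_j(\pi_j)=C^*_j(t_j,g_j)$ for all $j\in\{1,\dots,k\}$.
   Context: A state space is a weighted directed graph $S=\langle T,\Pi,C\rangle$ where $T$ is a finite set of states, $\Pi\subseteq T\times T$ is a set of directed edges, and $C:\Pi\to\mathbb{N}=\{0,1,2,\dots\}$. A path from $u$ to $v$ is a sequence of edges $\langle\pi^1,\dots,\pi^n\rangle$ with $\pi^j=(u^{j-1},u^j)\in\Pi$, $u^0=u$, $u^n=v$; its cost is $C(\pi)=\sum_j C(\pi^j)$. An abstract state space is $A_i=\langle T_i,\Pi_i,C_i,R_i\rangle$ with $T_i$ a set of abstract states, $\Pi_i\subseteq T_i\times T_i$, and edge weights $C_i,R_i:\Pi_i\to\mathbb{N}$ (primary and residual cost), extended additively to paths. An abstraction of $S$ is a pair $(A_i,\psi_i)$ with $\psi_i:T\to T_i$ such that (1) for every $(u,v)\in\Pi$, $(\psi_i(u),\psi_i(v))\in\Pi_i$, and (2) for every $\pi=(u,v)\in\Pi$, $C_i(\pi_i)+R_i(\pi_i)\le C(\pi)$ where $\pi_i=(\psi_i(u),\psi_i(v))$. The system is additive if for every $\pi\in\Pi$, $\sum_{i=1}^k C_i(\pi_i)\le C(\pi)$. Write $t_i=\psi_i(t)$, and for a path $\pi=\langle\pi^1,\dots,\pi^n\rangle$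 in $S$ let $\pi_i=\langle\pi^1_i,\dots,\pi^n_i\rangle$ be its edgewise image, a path in $A_i$. Define $C^*_i(x,y)=\min\{C_i(\rho):\rho\text{ a path from }x\text{ to }y\text{ in }A_i\}$. *)

From mathcomp Require Import all_boot.
From Stdlib Require Import ClassicalEpsilon.
Set Implicit Arguments. Unset Strict Implicit. Unset Printing Implicit Defensive.

(* A path in a directed graph with edge relation [E] from [u] to [v] is
   represented by its vertex sequence [u :: p]: consecutive vertices are
   joined by edges and the last vertex is [v]. The empty [p] is the
   path with no edges (from u to u). *)
Definition is_path {V : Type} (E : rel V) (u v : V) (p : seq V) : Prop :=
  path E u p /\ last u p = v.

Definition pcost {V : Type} (W : V -> V -> nat) (u : V) (p : seq V) : nat :=
  sumn (pairmap W u p).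

(* C^*(x,y): the minimum cost of a path from x to y (chosen by
   classical description; well defined whenever some path exists). *)
Definition Cstar {V : Type} (E : rel V) (W : V -> V -> nat) (x y : V) : nat :=
  epsilon (inhabits 0%N)
    (fun n => (exists p, is_path E x y p /\ pcost W x p = n) /\
              (forall p, is_path E x y p -> n <= pcost W x p)).

Definition is_abstraction {T TA : Type} (E : rel T) (C : T -> T -> nat)
    (EA : rel TA) (CA RA : TA -> TA -> nat) (psi : T -> TA) : Prop :=
  (forall u v, E u v -> EA (psi u) (psi v)) /\
  (forall u v, E u v -> CA (psi u) (psi v) + RA (psi u) (psi v) <= C u v).

Definition additive_system {T : Type} (k : nat) (TA : 'I_k -> Type)
    (E : rel T) (C : T -> T -> nat)
    (CA : forall i, TA i -> TA i -> nat) (psi : forall i, T -> TA i) : Prop :=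
  forall u v, E u v -> \sum_(i < k) CA i (psi i u) (psi i v) <= C u v.

From mathcomp Require Import all_boot.
From Stdlib Require Import Classical ClassicalEpsilon Wf_nat.

(* The edgewise image of pi is a path from t_j to g_j in every abstraction,
   so C^*_j(t_j, g_j) <= C_j(pi_j) for each j; summing and using additivity
   edge by edge, sum_j C_j(pi_j) <= C(pi) = sum_j C^*_j(t_j, g_j). A family
   of termwise inequalities whose sums go the other way consists of
   equalities. *)

Lemma eq_of_leq_sum {I : finType} {a b : I -> nat} :
  (forall i, a i <= b i) -> \sum_i b i <= \sum_i a i -> forall i, a i = b i.
Proof.
move=> le_ab le_sum i.
have /leqif_sum [_] : forall i, predT i -> a i <= b i ?= iff (a i == b i).
  by move=> j _; apply: leqif_eq.
have -> : (\sum_i a i == \sum_i b i) by rewrite eqn_leq le_sum leq_sum.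
by move=> /esym/forallP/(_ i)/eqP.
Qed.

Lemma Cstar_le_pcost (V : Type) (E : rel V) (W : V -> V -> nat) x y p :
  is_path E x y p -> Cstar E W x y <= pcost W x p.
Proof.
move=> path_p.
pose attained n := exists q, is_path E x y q /\ pcost W x q = n.
have [m [[attained_m min_m] _]] : has_unique_least_element le attained.
  apply: dec_inh_nat_subset_has_unique_least_element => [n|].
    exact: classic.
  by exists (pcost W x p), p.
have /(epsilon_spec (inhabits 0)) [_ ->] // :
    exists n, attained n /\ forall q, is_path E x y q -> n <= pcost W x q.
by exists m; split=> // q path_q; apply/leP/min_m; exists q.
Qed.

Lemma is_path_map (V V' : Type) (E : rel V) (E' : rel V') (f : V -> V') :
  {homo f : u v / E u v >-> E' u v} ->
  forall u v p, is_path E u v p -> is_path E' (f u) (f v) (map f p).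
Proof.
move=> hom_f u v p [path_p last_p]; split.
  exact: homo_path path_p.
by rewrite last_map last_p.
Qed.

Lemma sum_pcost_map_le (T : Type) (E : rel T) (C : T -> T -> nat)
    (k : nat) (TA : 'I_k -> Type) (CA : forall i, TA i -> TA i -> nat)
    (psi : forall i, T -> TA i) :
  additive_system E C CA psi -> forall t p, path E t p ->
  \sum_(i < k) pcost (CA i) (psi i t) (map (psi i) p) <= pcost C t p.
Proof.
move=> add_sys t p; elim: p t => [|u p IHp] t /=.
  by move=> _; rewrite /pcost big1.
move=> /andP [E_tu path_p]; rewrite /pcost /= big_split leq_add //.
  exact: add_sys.
exact: IHp.
Qed.

Theorem lemma7 (T : finType) (E : rel T) (C : T -> T -> nat)
    (k : nat) (TA : 'I_k -> Type) (EA : forall i, rel (TA i))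
    (CA RA : forall i, TA i -> TA i -> nat) (psi : forall i, T -> TA i)
    (Habs : forall i, is_abstraction E C (EA i) (CA i) (RA i) (psi i))
    (Hadd : additive_system E C CA psi)
    (t g : T) (p : seq T)
    (Hp : is_path E t g p)
    (Hopt : pcost C t p = \sum_(i < k) Cstar (EA i) (CA i) (psi i t) (psi i g)) :
  forall j : 'I_k,
    pcost (CA j) (psi j t) (map (psi j) p) = Cstar (EA j) (CA j) (psi j t) (psi j g).
Proof.
have Cstar_le i :
    Cstar (EA i) (CA i) (psi i t) (psi i g)
      <= pcost (CA i) (psi i t) (map (psi i) p).
  by apply/Cstar_le_pcost/is_path_map/Hp; case: (Habs i).
have sum_pcost_le :
    \sum_i pcost (CA i) (psi i t) (map (psi i) p)
      <= \sum_i Cstar (EA i) (CA i) (psi i t) (psi i g).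
  by rewrite -Hopt; apply: sum_pcost_map_le Hadd _ _ _; case: Hp.
by move=> j; rewrite (eq_of_leq_sum Cstar_le sum_pcost_le).
Qed.
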